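(* Let $a>0$ and $k\in\mathbb{N}^*$. For all $m\in\{0,\dots,k-1\}$ and $\ell\in\{0,\dots,k-1\}$, $$\frac{1}{n^m}\frac{d^m}{dx^m}\Big(F_{n,\ell}(a;x)-F_{n,\ell+1}(a;x)\Big)\Big|_{x=a}\xrightarrow[n\to\infty]{}(-1)^\ell\binom m\ell,$$ with $\binom m\ell=0$ when $\ell>m$.
   Context: $f(y)=e^{-y}\mathbb 1_{y\ge0}$, $F(y)=(1-e^{-y})\mathbb 1_{y\ge0}$, $f(y;x)=\frac{f(y)}{1-F(x)}\mathbb 1_{y\ge x}$, $F(y;x)=\frac{F(y)-F(x)}{1-F(x)}\mathbb 1_{y\ge x}$, $f_{n,\ell}(y;x)=\ell\binom n\ell F(y;x)^{\ell-1}f(y;x)(1-F(y;x))^{n-\ell}$ (density of the $\ell$-th order statistic of $n$ i.i.d. variables with law $\mathcal{E}(1)$ conditioned on exceeding $x$), $F_{n,\ell}(y;x)=\int_x^y f_{n,\ell}(z;x)dz$ for $\ell\ge1$, and $F_{n,0}(y;x)=\mathbb 1_{y\ge x}$. Derivatives in $x$ at $x=a$ are left derivatives. *)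

From Stdlib Require Import Reals Lra Lia ClassicalEpsilon.
Open Scope R_scope.

Definition binom (n k : nat) : R := if Nat.leb k n then C n k else 0.

(* Riemann integral int_a^b g (Stdlib RiemannInt, oriented); value 0 if not integrable.
   Defined by choice, since the value of RiemannInt does not depend on the proof. *)
Definition RInt (g : R -> R) (a b : R) : R :=
  epsilon (inhabits 0)
    (fun v => exists pr : Riemann_integrable g a b, RiemannInt pr = v).

Definition fE (y : R) : R := if Rle_dec 0 y then exp (- y) else 0.
Definition FE (y : R) : R := if Rle_dec 0 y then 1 - exp (- y) else 0.

(* conditioned on exceeding x : f(y;x), F(y;x) *)
Definition fc (y x : R) : R := if Rle_dec x y then fE y / (1 - FE x) else 0.
Definition Fc (y x : R) : R := if Rle_dec x y then (FE y - FE x) / (1 - FE x) else 0.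

(* density of the l-th order statistic: f_{n,l}(y;x) *)
Definition fnl (n l : nat) (y x : R) : R :=
  INR l * binom n l * (Fc y x) ^ (l - 1) * fc y x * (1 - Fc y x) ^ (n - l).

Definition Fnl (n l : nat) (y x : R) : R :=
  match l with
  | O => if Rle_dec x y then 1 else 0
  | S _ => RInt (fun z => fnl n l z x) x y
  end.

Definition left_deriv_lim (g : R -> R) (x d : R) : Prop :=
  forall eps : R, 0 < eps -> exists delta : R, 0 < delta /\
    forall h : R, - delta < h < 0 -> Rabs ((g (x + h) - g x) / h - d) < eps.

Definition left_nth_deriv (m : nat) (g : R -> R) (a v : R) : Prop :=
  exists delta : R, 0 < delta /\ exists D : nat -> R -> R,
    (forall y, a - delta < y <= a -> D O y = g y) /\
    (forall i, (i < m)%nat ->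
       (forall y, a - delta < y < a -> derivable_pt_lim (D i) y (D (S i) y)) /\
       left_deriv_lim (D i) a (D (S i) a)) /\
    D m a = v.

From Pilot Require Import Defs.
From Stdlib Require Import Reals Lra Lia ClassicalEpsilon.
From Coquelicot Require Import Coquelicot.
Open Scope R_scope.

(** For [0 <= x <= a], [F_{n,l}(a;x) - F_{n,l+1}(a;x)] is the probability that
    exactly [l] of the [n] conditioned variables lie below [a], i.e. the
    Bernstein polynomial [binom n l t^l (1-t)^(n-l)] at [t = 1 - e^(x-a)]; this
    follows from the fundamental theorem of calculus, since the derivative of
    that Bernstein polynomial is the difference of two order-statistic
    densities.  Writing [s = x - a] and [N = n - l], the expansion
    [(1 - e^s)^l e^(N s) = sum_j (-1)^j C(l,j) e^((N+j) s)] shows that the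
    [m]-th derivative at [s = 0] is [binom n l] times the [l]-fold difference
    [g(y) - g(y+1)] of [y^m] evaluated at [N].  This difference is a
    polynomial equivalent to [(-1)^l m!/(m-l)! N^(m-l)], and
    [binom n l ~ n^l / l!], whence the limit [(-1)^l C(m,l)]; for [l > m] the
    difference vanishes identically. *)

Fixpoint neg_fdiff (l : nat) (f : R -> R) (x : R) : R :=
  match l with
  | O => f x
  | S l' => neg_fdiff l' f x - neg_fdiff l' f (x + 1)
  end.

Lemma neg_fdiff_ext l f g x :
  (forall y, f y = g y) -> neg_fdiff l f x = neg_fdiff l g x.
Proof.
  intros Hfg; revert x; induction l as [|l IH]; intros x; simpl.
  - apply Hfg.
  - rewrite !IH; reflexivity.
Qed.

Lemma neg_fdiff_const l c x : neg_fdiff (S l) (fun _ => c) x = 0.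
Proof. revert x; induction l as [|l IH]; intros x; simpl in *; [|rewrite !IH]; ring. Qed.

Lemma neg_fdiff_geometric l f q x :
  (forall y, f (y + 1) = q * f y) -> neg_fdiff l f x = (1 - q) ^ l * f x.
Proof.
  intros Hf; revert x; induction l as [|l IH]; intros x; simpl.
  - ring.
  - rewrite !IH, Hf; ring.
Qed.

Lemma neg_fdiff_mul_id l f x :
  neg_fdiff (S l) (fun y => y * f y) x
  = x * neg_fdiff (S l) f x - INR (S l) * neg_fdiff l f (x + 1).
Proof.
  revert x; induction l as [|l IH]; intros x.
  - simpl; ring.
  - change (neg_fdiff (S (S l)) (fun y => y * f y) x)
      with (neg_fdiff (S l) (fun y => y * f y) x
            - neg_fdiff (S l) (fun y => y * f y) (x + 1)).
    rewrite !IH; cbn [neg_fdiff]; rewrite !(S_INR (S l)); ring.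
Qed.

Lemma neg_fdiff_pow_lt r l x : (r < l)%nat -> neg_fdiff l (fun y => y ^ r) x = 0.
Proof.
  revert l x; induction r as [|r IH]; intros l x Hrl;
    destruct l as [|l]; try lia.
  - exact (neg_fdiff_const l 1 x).
  - change (neg_fdiff (S l) (fun y => y * y ^ r) x = 0).
    rewrite neg_fdiff_mul_id, !IH by lia; ring.
Qed.

Lemma is_derive_neg_fdiff l (g g' : R -> R -> R) x t :
  (forall y t, is_derive (fun t => g t y) t (g' t y)) ->
  is_derive (fun t => neg_fdiff l (g t) x) t (neg_fdiff l (g' t) x).
Proof.
  intros Hg; revert x; induction l as [|l IH]; intros x; simpl.
  - apply Hg.
  - apply (is_derive_minus (fun t => neg_fdiff l (g t) x)
                           (fun t => neg_fdiff l (g t) (x + 1))); apply IH.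
Qed.

Definition lim_div_pow (f : R -> R) (d : nat) (c : R) : Prop :=
  is_lim (fun x => f x / x ^ d) p_infty c.

Lemma lim_div_pow_ext f g d c :
  (forall x, 0 < x -> f x = g x) -> lim_div_pow f d c -> lim_div_pow g d c.
Proof.
  intros Hfg Hf; apply is_lim_ext_loc with (2 := Hf).
  exists 0; intros x Hx; rewrite Hfg; auto.
Qed.

Lemma lim_div_pow_pow d : lim_div_pow (fun x => x ^ d) d 1.
Proof.
  apply is_lim_ext_loc with (f := fun _ => 1); [|apply is_lim_const].
  exists 0; intros x Hx; field; apply pow_nonzero; lra.
Qed.

Lemma lim_div_pow_mul_id f d c :
  lim_div_pow f d c -> lim_div_pow (fun x => x * f x) (S d) c.
Proof.
  intros Hf; apply is_lim_ext_loc with (2 := Hf).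
  exists 0; intros x Hx; simpl; field; split; [apply pow_nonzero|]; lra.
Qed.

Lemma lim_div_pow_plus f g d c1 c2 :
  lim_div_pow f d c1 -> lim_div_pow g d c2 ->
  lim_div_pow (fun x => f x + g x) d (c1 + c2).
Proof.
  intros Hf Hg.
  apply is_lim_ext_loc with (f := fun x => f x / x ^ d + g x / x ^ d).
  - exists 0; intros x Hx; field; apply pow_nonzero; lra.
  - eapply is_lim_plus; eauto; reflexivity.
Qed.

Lemma lim_div_pow_scal k f d c :
  lim_div_pow f d c -> lim_div_pow (fun x => k * f x) d (k * c).
Proof.
  intros Hf; apply is_lim_ext_loc with (f := fun x => k * (f x / x ^ d)).
  - exists 0; intros x Hx; field; apply pow_nonzero; lra.
  - apply (is_lim_scal_l _ k p_infty c Hf).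
Qed.

Lemma lim_div_pow_mult f g d1 d2 c1 c2 :
  lim_div_pow f d1 c1 -> lim_div_pow g d2 c2 ->
  lim_div_pow (fun x => f x * g x) (d1 + d2) (c1 * c2).
Proof.
  intros Hf Hg.
  apply is_lim_ext_loc with (f := fun x => (f x / x ^ d1) * (g x / x ^ d2)).
  - exists 0; intros x Hx; rewrite pow_add; field; split; apply pow_nonzero; lra.
  - apply (is_lim_mult _ _ p_infty c1 c2 Hf Hg); simpl; auto.
Qed.

Lemma is_lim_shift_ratio_pow s d : is_lim (fun x => ((x + s) / x) ^ d) p_infty 1.
Proof.
  assert (Hratio : is_lim (fun x => (x + s) / x) p_infty 1).
  { apply is_lim_ext_loc with (f := fun x => 1 + s * / x).
    - exists 0; intros x Hx; field; lra.
    - eapply is_lim_plus; [apply is_lim_const| |].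
      + apply is_lim_scal_l, (is_lim_inv (fun y => y) p_infty p_infty);
          [apply is_lim_id|discriminate].
      + unfold is_Rbar_plus; simpl; do 2 f_equal; ring. }
  induction d as [|d IH]; simpl.
  - apply is_lim_const.
  - replace (Finite 1) with (Rbar_mult 1 1) by (simpl; f_equal; ring).
    apply is_lim_mult; auto; simpl; auto.
Qed.

Lemma lim_div_pow_shift s f d c :
  lim_div_pow f d c -> lim_div_pow (fun x => f (x + s)) d c.
Proof.
  intros Hf.
  apply is_lim_ext_loc
    with (f := fun x => (f (x + s) / (x + s) ^ d) * ((x + s) / x) ^ d).
  - exists (Rabs s); intros x Hx.
    assert (0 < x) by (pose proof (Rabs_pos s); lra).
    assert (0 < x + s) by (pose proof (Rle_abs (- s)); rewrite Rabs_Ropp in *; lra).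
    unfold Rdiv; rewrite Rpow_mult_distr, pow_inv.
    field; split; apply pow_nonzero; lra.
  - replace (Finite c) with (Rbar_mult c 1) by (simpl; f_equal; ring).
    apply is_lim_mult; [| apply is_lim_shift_ratio_pow | simpl; auto].
    apply (is_lim_comp (fun y => f y / y ^ d) (fun x => x + s) p_infty c p_infty Hf).
    + replace p_infty with (Rbar_plus p_infty s) at 2 by reflexivity.
      eapply is_lim_plus; [apply is_lim_id | apply is_lim_const | reflexivity].
    + exists 0; intros; discriminate.
Qed.

Lemma C_diag n : Binomial.C n n = 1.
Proof. rewrite pascal_step1, Nat.sub_diag by lia; apply C_n_0. Qed.

Lemma lim_div_pow_neg_fdiff_pow r l : (l <= r)%nat ->
  lim_div_pow (neg_fdiff l (fun y => y ^ r)) (r - l)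
    ((-1) ^ l * Binomial.C r l * INR (Factorial.fact l)).
Proof.
  revert l; induction r as [|r IH]; intros l Hl.
  - replace l with 0%nat by lia; simpl; rewrite C_n_0, !Rmult_1_l.
    apply (lim_div_pow_pow 0).
  - destruct l as [|l].
    + simpl; rewrite C_n_0, !Rmult_1_l; apply (lim_div_pow_pow (S r)).
    + apply lim_div_pow_ext with
        (f := fun x => x * neg_fdiff (S l) (fun y => y ^ r) x
                       + - INR (S l) * neg_fdiff l (fun y => y ^ r) (x + 1)).
      { intros x _; change (fun y => y ^ S r) with (fun y => y * y ^ r).
        rewrite neg_fdiff_mul_id; ring. }
      replace (S r - S l)%nat with (r - l)%nat by lia.
      rewrite fact_simpl, mult_INR; simpl pow.
      destruct (Nat.eq_dec l r) as [->|Hlr].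
      * apply lim_div_pow_ext with
          (f := fun x => - INR (S r) * neg_fdiff r (fun y => y ^ r) (x + 1)).
        { intros x _; rewrite (neg_fdiff_pow_lt r (S r)) by lia; ring. }
        replace (-1 * (-1) ^ r * Binomial.C (S r) (S r) * (INR (S r) * INR (Factorial.fact r)))
          with (- INR (S r) * ((-1) ^ r * Binomial.C r r * INR (Factorial.fact r)))
          by (rewrite !C_diag; ring).
        apply lim_div_pow_scal, lim_div_pow_shift; apply IH; lia.
      * replace (-1 * (-1) ^ l * Binomial.C (S r) (S l) * (INR (S l) * INR (Factorial.fact l)))
          with ((-1) ^ S l * Binomial.C r (S l) * INR (Factorial.fact (S l))
                + - INR (S l) * ((-1) ^ l * Binomial.C r l * INR (Factorial.fact l)))
          by (rewrite <- pascal by lia; rewrite fact_simpl, mult_INR; simpl pow; ring).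
        apply lim_div_pow_plus.
        -- replace (r - l)%nat with (S (r - S l)) by lia.
           apply lim_div_pow_mul_id, IH; lia.
        -- apply lim_div_pow_scal, lim_div_pow_shift, IH; lia.
Qed.

Fixpoint falling (x : R) (l : nat) : R :=
  match l with O => 1 | S l' => falling x l' * (x - INR l') end.

Lemma lim_div_pow_falling l : lim_div_pow (fun x => falling x l) l 1.
Proof.
  induction l as [|l IH]; simpl.
  - apply (lim_div_pow_pow 0).
  - replace (S l) with (l + 1)%nat by lia; rewrite <- (Rmult_1_l 1).
    apply lim_div_pow_mult; [exact IH|].
    apply lim_div_pow_ext with (f := fun x => (x + - INR l) ^ 1); [intros; ring|].
    apply (lim_div_pow_shift (- INR l) (fun x => x ^ 1)), lim_div_pow_pow.
Qed.

Lemma binom_succ n l : INR (S l) * binom n (S l) = INR (n - l) * binom n l.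
Proof.
  unfold binom; destruct (Nat.leb_spec (S l) n), (Nat.leb_spec l n); try lia.
  - rewrite pascal_step3 by lia; field; apply not_0_INR; lia.
  - replace (n - l)%nat with 0%nat by lia; simpl; ring.
  - ring.
Qed.

Lemma binom_mul_fact n l : binom n l * INR (Factorial.fact l) = falling (INR n) l.
Proof.
  induction l as [|l IH]; simpl falling.
  - unfold binom; simpl; rewrite C_n_0; ring.
  - rewrite <- IH, fact_simpl, mult_INR.
    transitivity (INR (S l) * binom n (S l) * INR (Factorial.fact l)); [ring|].
    rewrite binom_succ; destruct (Nat.le_gt_cases l n).
    + rewrite minus_INR by lia; ring.
    + unfold binom; destruct (Nat.leb_spec l n); try lia; ring.
Qed.

Lemma binom_neg_fdiff_pow_limit m l :
  Un_cv (fun n => binom n l * neg_fdiff l (fun y => y ^ m) (INR (n - l)) / INR n ^ m)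
        ((-1) ^ l * binom m l).
Proof.
  apply is_lim_seq_Reals.
  destruct (Nat.le_gt_cases l m) as [Hlm|Hlm].
  - set (G x := / INR (Factorial.fact l)
                * (falling x l * neg_fdiff l (fun y => y ^ m) (x + - INR l))).
    assert (HG : lim_div_pow G m ((-1) ^ l * binom m l)).
    { replace ((-1) ^ l * binom m l)
        with (/ INR (Factorial.fact l)
              * (1 * ((-1) ^ l * Binomial.C m l * INR (Factorial.fact l)))).
      - apply lim_div_pow_scal; replace m with (l + (m - l))%nat at 1 by lia.
        apply lim_div_pow_mult; [apply lim_div_pow_falling|].
        apply (lim_div_pow_shift (- INR l)), lim_div_pow_neg_fdiff_pow, Hlm.
      - unfold binom; destruct (Nat.leb_spec l m); try lia.
        field; apply INR_fact_neq_0. }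
    apply is_lim_seq_ext_loc with (u := fun n => G (INR n) / INR n ^ m).
    + exists l; intros n Hn; unfold G; rewrite <- binom_mul_fact, minus_INR by lia.
      unfold Rminus; f_equal; field; apply INR_fact_neq_0.
    + apply (is_lim_comp_seq (fun x => G x / x ^ m) INR p_infty _ HG);
        [exists 0%nat; intros; discriminate | apply is_lim_seq_INR].
  - apply is_lim_seq_ext with (u := fun _ => 0).
    + intros n; rewrite neg_fdiff_pow_lt by lia; unfold Rdiv; ring.
    + unfold binom; destruct (Nat.leb_spec l m); try lia.
      rewrite Rmult_0_r; apply is_lim_seq_const.
Qed.

Definition bernstein (n l : nat) (t : R) : R := binom n l * t ^ l * (1 - t) ^ (n - l).

Definition order_stat_density (n k : nat) (t : R) : R :=
  INR k * binom n k * t ^ (k - 1) * (1 - t) ^ (n - k).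

Lemma is_derive_bernstein n l t :
  is_derive (bernstein n l) t (order_stat_density n l t - order_stat_density n (S l) t).
Proof.
  unfold bernstein, order_stat_density; auto_derive; [auto|].
  rewrite <- Nat.sub_1_r, <- Nat.sub_succ_r, binom_succ.
  replace (S l - 1)%nat with l by lia; unfold Rminus; ring.
Qed.

Lemma fnl_eq n k z x : 0 <= x <= z ->
  fnl n k z x = order_stat_density n k (1 - exp (x - z)) * exp (x - z).
Proof.
  intros Hxz.
  assert (Hexp : exp (- z) / exp (- x) = exp (x - z)).
  { unfold Rdiv; rewrite <- exp_Ropp, <- exp_plus, Ropp_involutive; f_equal; ring. }
  unfold fnl, order_stat_density, Fc, fc, FE, fE.
  destruct (Rle_dec x z), (Rle_dec 0 z), (Rle_dec 0 x); try lra.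
  replace (1 - (1 - exp (- x))) with (exp (- x)) by ring.
  replace ((1 - exp (- z) - (1 - exp (- x))) / exp (- x)) with (1 - exp (x - z))
    by (rewrite <- Hexp; field; apply Rgt_not_eq, exp_pos).
  rewrite Hexp; ring.
Qed.

Lemma Defs_RInt_eq f x a : ex_RInt f x a -> Defs.RInt f x a = RInt f x a.
Proof.
  intros Hf; pose proof (ex_RInt_Reals_0 f x a Hf) as pr; unfold Defs.RInt.
  destruct (epsilon_spec (inhabits 0)
              (fun v => exists pr, RiemannInt pr = v) (ex_intro _ _ (ex_intro _ pr eq_refl)))
    as [pr' <-].
  symmetry; apply RInt_Reals.
Qed.

Section OrderStatistics.

Variables (n : nat) (x a : R).
Hypothesis Hxa : 0 <= x <= a.

Let density (k : nat) (z : R) : R :=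
  order_stat_density n k (1 - exp (x - z)) * exp (x - z).

Lemma continuous_density k z : continuous (density k) z.
Proof.
  apply (ex_derive_continuous (density k)).
  unfold density, order_stat_density; auto_derive; auto.
Qed.

Lemma ex_RInt_density k : ex_RInt (density k) x a.
Proof.
  apply (ex_RInt_continuous (V := R_CompleteNormedModule)).
  intros; apply continuous_density.
Qed.

(* [bernstein n l 0] is [1] for [l = 0] and [0] otherwise, matching [F_{n,0} = 1]. *)
Lemma Fnl_integral l : Fnl n l a x = bernstein n l 0 + RInt (density l) x a.
Proof.
  destruct l as [|l]; unfold Fnl.
  - destruct (Rle_dec x a); [|lra].
    rewrite (RInt_ext _ (fun _ => 0)), RInt_const.
    + unfold bernstein, binom; simpl.
      rewrite C_n_0, Rminus_0_r, Nat.sub_0_r, pow1.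
      change (scal (a - x) 0) with ((a - x) * 0); ring.
    + intros z _; unfold density, order_stat_density; simpl INR.
      rewrite !Rmult_0_l; reflexivity.
  - rewrite Defs_RInt_eq, (RInt_ext _ (density (S l))).
    + unfold bernstein; rewrite pow_i, Rmult_0_r, Rmult_0_l, Rplus_0_l by lia; reflexivity.
    + intros z Hz; rewrite Rmin_left, Rmax_right in Hz by lra.
      apply fnl_eq; lra.
    + apply (ex_RInt_ext (density (S l))); [|apply ex_RInt_density].
      intros z Hz; rewrite Rmin_left, Rmax_right in Hz by lra.
      symmetry; apply fnl_eq; lra.
Qed.

Lemma Fnl_sub_Fnl l :
  Fnl n l a x - Fnl n (S l) a x = bernstein n l (1 - exp (x - a)).
Proof.
  assert (Hftc : is_RInt (fun z => density l z - density (S l) z) x a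
                   (bernstein n l (1 - exp (x - a)) - bernstein n l (1 - exp (x - x)))).
  { apply (is_RInt_derive (fun z => bernstein n l (1 - exp (x - z)))).
    - intros z _; unfold density.
      replace (order_stat_density n l (1 - exp (x - z)) * exp (x - z)
               - order_stat_density n (S l) (1 - exp (x - z)) * exp (x - z))
        with (exp (x - z) * (order_stat_density n l (1 - exp (x - z))
                             - order_stat_density n (S l) (1 - exp (x - z)))) by ring.
      apply (is_derive_comp (bernstein n l)); [apply is_derive_bernstein|].
      auto_derive; auto; unfold Rminus; ring.
    - intros z _; apply (continuous_minus (density l) (density (S l)));
        apply continuous_density. }
  rewrite !Fnl_integral.
  rewrite Rminus_diag, exp_0, Rminus_diag in Hftc.
  apply (is_RInt_unique (V := R_CompleteNormedModule)) in Hftc.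
  rewrite (RInt_minus (V := R_CompleteNormedModule)) in Hftc by apply ex_RInt_density.
  unfold minus, plus, opp in Hftc; simpl in Hftc.
  unfold bernstein at 2; rewrite pow_i by lia; lra.
Qed.

End OrderStatistics.

Lemma exp_pow s k : exp s ^ k = exp (INR k * s).
Proof.
  induction k as [|k IH].
  - simpl; rewrite Rmult_0_l, exp_0; reflexivity.
  - rewrite <- tech_pow_Rmult, IH, S_INR, <- exp_plus; f_equal; ring.
Qed.

Lemma bernstein_exp_neg_fdiff n l s :
  bernstein n l (1 - exp s)
  = binom n l * neg_fdiff l (fun N => exp (N * s)) (INR (n - l)).
Proof.
  rewrite (neg_fdiff_geometric l _ (exp s)).
  - unfold bernstein; replace (1 - (1 - exp s)) with (exp s) by ring.
    rewrite exp_pow; ring.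
  - intros y; rewrite <- exp_plus; f_equal; ring.
Qed.

Lemma derivable_pt_lim_neg_fdiff_exp c l i N a y :
  derivable_pt_lim (fun x => c * neg_fdiff l (fun M => M ^ i * exp (M * (x - a))) N) y
    (c * neg_fdiff l (fun M => M ^ S i * exp (M * (y - a))) N).
Proof.
  apply is_derive_Reals, (is_derive_scal (fun x => neg_fdiff l _ N)).
  apply (is_derive_neg_fdiff l (fun x M => M ^ i * exp (M * (x - a)))
                              (fun x M => M ^ S i * exp (M * (x - a)))).
  intros M x; auto_derive; auto; unfold Rminus; simpl; ring.
Qed.

Lemma left_deriv_of_derivable_pt_lim f x d :
  derivable_pt_lim f x d -> left_deriv_lim f x d.
Proof.
  intros Hf eps Heps; destruct (Hf eps Heps) as [delta Hdelta].
  exists delta; split; [apply cond_pos|].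
  intros h Hh; apply Hdelta; [lra|rewrite Rabs_left; lra].
Qed.

Lemma left_nth_deriv_of_derivable (D : nat -> R -> R) g a delta m :
  0 < delta ->
  (forall y, a - delta < y <= a -> D O y = g y) ->
  (forall i y, derivable_pt_lim (D i) y (D (S i) y)) ->
  left_nth_deriv m g a (D m a).
Proof.
  intros Hdelta Hg HD; exists delta; split; [exact Hdelta|].
  exists D; repeat split; auto.
  apply left_deriv_of_derivable_pt_lim, HD.
Qed.

Theorem mainTheorem8 (a : R) (k : nat) (ha : 0 < a) (hk : (1 <= k)%nat) :
  forall m l : nat, (m < k)%nat -> (l < k)%nat ->
  exists u : nat -> R,
    (forall n : nat,
       left_nth_deriv m (fun x => Fnl n l a x - Fnl n (S l) a x) a (u n)) /\
    Un_cv (fun n => u n / (INR n) ^ m) ((-1) ^ l * binom m l).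
Proof.
  intros m l _ _.
  exists (fun n => binom n l * neg_fdiff l (fun y => y ^ m) (INR (n - l))).
  split; [intros n | apply binom_neg_fdiff_pow_limit].
  set (D i x := binom n l * neg_fdiff l (fun M => M ^ i * exp (M * (x - a))) (INR (n - l))).
  replace (binom n l * _) with (D m a).
  - apply (left_nth_deriv_of_derivable D _ a a m ha).
    + intros y Hy; unfold D; rewrite Fnl_sub_Fnl by lra.
      rewrite bernstein_exp_neg_fdiff; f_equal.
      apply neg_fdiff_ext; intros M; ring.
    + intros i y; apply derivable_pt_lim_neg_fdiff_exp.
  - unfold D; f_equal; apply neg_fdiff_ext; intros M.
    rewrite Rminus_diag, Rmult_0_r, exp_0; ring.
Qed.
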